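(* Let $k$ be a field, $A$ a $k$-algebra, $B$ a local $k$-algebra, $X$ an $(A,B)$-bimodule with central $k$-action, finitely generated on both sides, and $\Lambda=\begin{pmatrix}A&X\\0&B\end{pmatrix}$. Fix a minimal generating set $g_1,\dots,g_r$ of the right $B$-module $X$, let $\bar g=[\bar g_1\ \cdots\ \bar g_r]\in M_{1,r}(X/XJ_B)$ with $\bar{(\cdot)}:X\to X/XJ_B$, and let $\pi:X\to M_{r,1}(B/J_B)$ be the composite of $X\to X/XJ_B$ with the inverse of the isomorphism $M_{r,1}(B/J_B)\to X/XJ_B$, $c\mapsto\bar gc$; extend $\pi$ entrywise to $\pi:M_{s,t}(X)\to M_{rs,t}(B/J_B)$. Let $\phi:M_s(A)\to M_{rs}(B/J_B)$ be the $k$-algebra morphism determined by $a(\bar gI_s)=(\bar gI_s)\phi(a)$, where $\bar gI_s\in M_{s,rs}(X/XJ_B)$ is block diagonal with $s$ copies of $\bar g$. Let $s,t\ge0$. (a) For $a\in M_s(A)$, $x\in M_{s,t}(X)$, $b\in M_t(B)$ one has $\pi(axb)=\phi(a)\pi(x)\bar b$, where $\bar b$ is the image of $b$ in $M_t(B/J_B)$; i.e. $\pi$ is a morphism of $M_s(A)^{\rm op}\otimes_kM_t(B)$-modules. (b) If $x\in M_{s,t}(X)$ and the 2-term complex $P_x:=\big([0\ B]^{\oplus t}\xrightarrow{x(\cdot)}[A\ X]^{\oplus s}\big)$ (degrees $-1,0$) is presilting in $K^b(\operatorname{proj}\Lambda)$, then $\pi(x)\in M_{rs,t}(B/J_B)$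 has full rank.
   Context: $J_B$ is the Jacobson radical of $B$, so $B/J_B$ is a division ring and rank of matrices over it is well-defined. Presilting: $\operatorname{Hom}(P_x,P_x[\ell])=0$ for all $\ell>0$. *)

From HB Require Import structures.
From mathcomp Require Import all_boot all_algebra.
From mathcomp Require Import boolp.
Set Implicit Arguments. Unset Strict Implicit. Unset Printing Implicit Defensive.
Import GRing.Theory.
Local Open Scope ring_scope.

Section BimoduleDefs.
Variables (k : fieldType) (A : algType k) (B : unitAlgType k) (X : lmodType k).
Variables (la : A -> X -> X) (ra : X -> B -> X).

Definition is_bimodule : Prop :=
  ((forall a a' x, la (a + a') x = la a x + la a' x)) /\
      (forall a x x', la a (x + x') = la a x + la a x') /\
      (forall x, la 1 x = x) /\
      (forall a a' x, la (a * a') x = la a (la a' x)) /\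
      (forall x b b', ra x (b + b') = ra x b + ra x b') /\
      (forall x x' b, ra (x + x') b = ra x b + ra x' b) /\
      (forall x, ra x 1 = x) /\
      (forall x b b', ra x (b * b') = ra (ra x b) b') /\
   (forall a x b, la a (ra x b) = ra (la a x) b) /\
       (forall (c : k) a x, la (c *: a) x = c *: la a x) /\
       (forall (c : k) a x, la a (c *: x) = c *: la a x) /\
       (forall (c : k) x b, ra x (c *: b) = c *: ra x b) /\
       (forall (c : k) x b, ra (c *: x) b = c *: ra x b).

Definition left_generates n (h : 'I_n -> X) : Prop :=
  forall x, exists a : 'I_n -> A, x = \sum_i la (a i) (h i).
Definition right_generates n (h : 'I_n -> X) : Prop :=
  forall x, exists b : 'I_n -> B, x = \sum_i ra (h i) (b i).
Definition left_fg : Prop := exists n (h : 'I_n -> X), left_generates h.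
Definition right_fg : Prop := exists n (h : 'I_n -> X), right_generates h.

Definition minimal_right_gen r (g : 'I_r -> X) : Prop :=
  right_generates g /\
  forall r' (g' : 'I_r' -> X), right_generates g' -> (r <= r')%N.

Definition jacobson (j : B) : Prop := forall x z : B, (1 - x * j * z) \is a GRing.unit.

(* local ring (B is nonzero as a unitRingType): x or 1 - x is a unit *)
Definition local_ring : Prop :=
  forall x : B, x \is a GRing.unit \/ (1 - x) \is a GRing.unit.

Definition in_XJ (x : X) : Prop :=
  exists n (xs : 'I_n -> X) (js : 'I_n -> B),
    (forall i, jacobson (js i)) /\ x = \sum_i ra (xs i) (js i).

Variables (D : unitRingType) (q : B -> D).
(* residue_of g x c  <->  xbar = gbar * c  in X/XJ_B, where c in M_{r,1}(B/J_B)
   (B/J_B is represented by D via the surjection q with kernel J_B) *)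
Definition residue_of r (g : 'I_r -> X) (x : X) (c : 'I_r -> D) : Prop :=
  exists b : 'I_r -> B, (forall m, q (b m) = c m) /\
                        in_XJ (x - \sum_m ra (g m) (b m)).

Definition mx_lact s t (a : 'M[A]_s) (x : 'M[X]_(s, t)) : 'M[X]_(s, t) :=
  \matrix_(i, j) \sum_m la (a i m) (x m j).
Definition mx_ract s t (x : 'M[X]_(s, t)) (b : 'M[B]_t) : 'M[X]_(s, t) :=
  \matrix_(i, j) \sum_m ra (x i m) (b m j).

(* Presilting of P_x = ([0 B]^t --x(.)--> [A X]^s) in K^b(proj Lambda):
   Hom(P_x, P_x[l]) = 0 for l >= 2 trivially; Hom(P_x,P_x[1]) = 0 means every
   Lambda-map [0 B]^t -> [A X]^s (= left mult. by y in M_{s,t}(X)) is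
   null-homotopic, i.e. y = a x + x b with a in End([A X]^s) = M_s(A),
   b in End([0 B]^t) = M_t(B). *)
Definition Px_presilting s t (x : 'M[X]_(s, t)) : Prop :=
  forall y : 'M[X]_(s, t), exists (a : 'M[A]_s) (b : 'M[B]_t),
    y = mx_lact a x + mx_ract x b.

End BimoduleDefs.

(* row index of M_{rs}: k <-> (i, l), i : 'I_s the block, l : 'I_r in block *)
Definition blk_idx s r (kk : 'I_(s * r)) : 'I_s * 'I_r :=
  enum_val (cast_ord (esym (mxvec_cast s r)) kk).

Definition pi_mx (X : Type) (D : Type) r (pi : X -> 'cV[D]_r) s t
    (x : 'M[X]_(s, t)) : 'M[D]_(s * r, t) :=
  \matrix_(kk, j) pi (x (blk_idx kk).1 j) (blk_idx kk).2 ord0.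

Definition col_indep (D : unitRingType) m n (M : 'M[D]_(m, n)) (S : {set 'I_n}) : Prop :=
  forall c : 'I_n -> D, (forall i, \sum_(j in S) M i j * c j = 0) ->
    forall j, j \in S -> c j = 0.
Definition rankD (D : unitRingType) m n (M : 'M[D]_(m, n)) : nat :=
  (\max_(S : {set 'I_n} | `[< col_indep M S >]) #|S|)%N.
Definition full_rank (D : unitRingType) m n (M : 'M[D]_(m, n)) : Prop :=
  rankD M = minn m n.

From HB Require Import structures.
From mathcomp Require Import all_boot all_algebra.
From mathcomp Require Import boolp.
Set Implicit Arguments. Unset Strict Implicit. Unset Printing Implicit Defensive.
Import GRing.Theory.
Local Open Scope ring_scope.

(* The residues of a minimal generating set [g] of [X_B] are linearly
   independent over the division ring [D = B/J_B] (a unit coefficient in a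
   relation would make some [g l] redundant), so [pi] is well defined,
   additive and surjective, and (a) follows by expanding [a x b] along [g].
   For (b), presilting says that every [y] is [a x + x b]; applying [pi], every
   matrix over [D] is [P pi(x) + pi(x) Q].  A matrix [M] over a division ring
   with this property has full rank: otherwise there are nonzero [u], [c] with
   [u M = 0 = M c], and for a matrix unit [E_ij] with [u_i, c_j <> 0] we get
   [u E_ij c = u_i c_j <> 0], although [u (P M + M Q) c = 0]. *)

Lemma sum_eliminate_pivot (D : unitRingType) m n (M : 'I_m -> 'I_n -> D) i0 j0
    (c : 'I_n -> D) i :
  \sum_j M i j * (c j - ((M i0 j0)^-1 * \sum_l M i0 l * c l) *+ (j == j0)) =
  \sum_j (M i j - M i j0 * (M i0 j0)^-1 * M i0 j) * c j.
Proof.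
set x := _ * _.
rewrite (eq_bigr (fun j => M i j * c j - (M i j * x) *+ (j == j0))); last first.
  by move=> j _; rewrite mulrBr mulrnAr.
rewrite sumrB (eq_bigr _ (fun j _ => mulrb _ _)) -big_mkcond big_pred1_eq.
rewrite (eq_bigr _ (fun j _ => mulrBl _ _ _)) sumrB /x mulrA mulr_sumr.
by congr (_ - _); apply: eq_bigr => j _; rewrite !mulrA.
Qed.

Lemma homogeneous_system_nontrivial (D : unitRingType)
    (unitD : forall d : D, d != 0 -> d \is a GRing.unit) m n (M : 'I_m -> 'I_n -> D)
    (E : {set 'I_m}) (U : {set 'I_n}) : (#|E| < #|U|)%N ->
  exists c : 'I_n -> D, [/\ forall j, j \notin U -> c j = 0, exists j, c j != 0 &
    forall i, i \in E -> \sum_j M i j * c j = 0].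
Proof.
move Ecard: #|E| => N; elim: N M E U Ecard => [|N IH] M E U Ecard ltNU.
  have /card_gt0P [j0 j0U] := ltNU.
  exists (fun j => (j == j0)%:R); split.
  - by move=> j; case: eqVneq => // ->; rewrite j0U.
  - by exists j0; rewrite eqxx oner_neq0.
  - by move=> i; move/eqP: Ecard; rewrite cards_eq0 => /eqP ->; rewrite inE.
have [i0 i0E] : exists i0, i0 \in E by apply/card_gt0P; rewrite Ecard.
have E'card : #|E :\ i0| = N by move: Ecard; rewrite (cardsD1 i0) i0E => -[].
have [/existsP [j0 /andP [j0U pivot]] | /existsPn no_pivot] :=
  boolP [exists j, (j \in U) && (M i0 j != 0)]; last first.
  have [c [c_supp c_nz c_sol]] := IH M _ U E'card (ltnW ltNU).
  exists c; split=> // i iE; have [->|i_ne] := eqVneq i i0; last first.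
    by apply: c_sol; rewrite !inE i_ne.
  apply: big1 => j _; have [jU|/c_supp ->] := boolP (j \in U); last by rewrite mulr0.
  by move: (no_pivot j); rewrite jU negbK => /eqP ->; rewrite mul0r.
(* Gaussian elimination: solve the system with the unknown [j0] eliminated
   using equation [i0], then recover [c j0] from equation [i0]. *)
pose M' i j := M i j - M i j0 * (M i0 j0)^-1 * M i0 j.
have U'card : (N < #|U :\ j0|)%N by move: ltNU; rewrite (cardsD1 j0 U) j0U.
have [c' [c'_supp [j1 c'j1] c'_sol]] := IH M' _ _ E'card U'card.
exists (fun j => c' j - ((M i0 j0)^-1 * \sum_l M i0 l * c' l) *+ (j == j0)); split.
- move=> j jU; rewrite c'_supp ?inE ?(negbTE jU) ?andbF // sub0r.
  by case: eqVneq jU => [->|_ _]; rewrite ?j0U // mulr0n oppr0.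
- exists j1; have /negbTE -> : j1 != j0.
    by apply: contraNneq c'j1 => ->; rewrite c'_supp // !inE eqxx.
  by rewrite subr0.
move=> i iE; rewrite sum_eliminate_pivot -/(M' i _); have [->|i_ne] := eqVneq i i0.
  by apply: big1 => j _; rewrite /M' mulrV ?unitD // mul1r subrr mul0r.
by apply: c'_sol; rewrite !inE i_ne.
Qed.

Section DivisionRing.
Variable D : unitRingType.
Hypothesis unitD : forall d : D, d != 0 -> d \is a GRing.unit.

Lemma sum_supported n (S : {set 'I_n}) (F c : 'I_n -> D) :
  (forall j, j \notin S -> c j = 0) -> \sum_(j in S) F j * c j = \sum_j F j * c j.
Proof.
move=> c_supp; rewrite big_mkcond; apply: eq_bigr => j _.
by case: ifPn => // /c_supp ->; rewrite mulr0.
Qed.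

Lemma col_indep_card_leq_rows m n (M : 'M[D]_(m, n)) S : col_indep M S -> (#|S| <= m)%N.
Proof.
move=> indS; rewrite leqNgt; apply/negP => ltmS.
have ltTS : (#|[set: 'I_m]| < #|S|)%N by rewrite cardsT card_ord.
have [c [c_supp [j cj] c_sol]] :=
  homogeneous_system_nontrivial unitD (fun i j => M i j) ltTS.
have jS : j \in S by apply: contraNT cj => /c_supp ->.
by move/eqP: cj; apply; apply: (indS c) => // i; rewrite sum_supported // c_sol ?inE.
Qed.

Lemma rankD_leq_min m n (M : 'M[D]_(m, n)) : (rankD M <= minn m n)%N.
Proof.
apply/bigmax_leqP => S /asboolP indS; rewrite leq_min (col_indep_card_leq_rows indS) /=.
by have := max_card S; rewrite card_ord.
Qed.

Lemma col_indep_leq_rankD m n (M : 'M[D]_(m, n)) S :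
  col_indep M S -> (#|S| <= rankD M)%N.
Proof.
by move=> indS; apply: (leq_bigmax_cond (F := fun S : {set 'I_n} => #|S|)); apply/asboolP.
Qed.

Lemma rankD_witness m n (M : 'M[D]_(m, n)) : exists2 S, col_indep M S & #|S| = rankD M.
Proof.
pose P := [pred S : {set 'I_n} | `[< col_indep M S >]].
have P_gt0 : (0 < #|P|)%N.
  by apply/card_gt0P; exists set0; apply/asboolP => c _ j; rewrite inE.
have [S /asboolP indS rankE] := eq_bigmax_cond (fun S : {set 'I_n} => #|S|) P_gt0.
by exists S; rewrite // -rankE; apply: eq_bigl.
Qed.

Lemma col_span_of_dependent m n (M : 'M[D]_(m, n)) (S : {set 'I_n}) j :
  j \notin S -> col_indep M S -> ~ col_indep M (j |: S) ->
  exists c : 'I_n -> D, forall i, M i j = \sum_(l in S) M i l * c l.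
Proof.
move=> jS indS /existsNP [c /not_implyP [c_sol /existsNP [l0 /not_implyP [l0S cl0]]]].
have cj_neq0 : c j != 0.
  apply/eqP => cj0; apply: cl0; move: l0S; rewrite in_setU1 => /predU1P [->|] //.
  by apply: indS => i; have := c_sol i; rewrite big_setU1 //= cj0 mulr0 add0r.
exists (fun l => - (c l / c j)) => i.
have /eqP := c_sol i; rewrite big_setU1 //= addr_eq0 => /eqP Mcj.
rewrite -[M i j](mulrK (unitD cj_neq0)) Mcj mulNr mulr_suml -sumrN.
by apply: eq_big => // l _; rewrite mulrN mulrA.
Qed.

Lemma rankD_lt_col_ker m n (M : 'M[D]_(m, n)) :
  (rankD M < n)%N -> exists2 c : 'cV_n, c != 0 & M *m c = 0.
Proof.
move=> lt_rank_n.
have /existsNP [c /not_implyP [c_sol /existsNP [j /not_implyP [_ /eqP cj]]]] :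
    ~ col_indep M setT.
  by move=> /col_indep_leq_rankD; rewrite cardsT card_ord leqNgt lt_rank_n.
exists (\col_j c j); first by apply/cV0Pn; exists j; rewrite mxE.
apply/matrixP => i k; rewrite !mxE -[RHS](c_sol i).
by apply: eq_big => [l|l _]; rewrite ?inE ?mxE.
Qed.

Lemma rankD_lt_row_ker m n (M : 'M[D]_(m, n)) :
  (rankD M < m)%N -> exists2 u : 'rV_m, u != 0 & u *m M = 0.
Proof.
move=> lt_rank_m; have [S indS cardS] := rankD_witness M.
have ltST : (#|S| < #|[set: 'I_m]|)%N by rewrite cardsT card_ord cardS.
have [u [i ui] u_sol] : exists2 u : 'I_m -> D,
    exists i, u i != 0 & forall j, j \in S -> \sum_i u i * M i j = 0.
  (* Solve the transposed system over the opposite ring. *)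
  have [u [_ u_neq0 u_sol]] :=
    @homogeneous_system_nontrivial D^c unitD _ _ (fun j i => M i j) _ _ ltST.
  by exists u.
have uM j : \sum_i u i * M i j = 0.
  have [jS|jS] := boolP (j \in S); first exact: u_sol.
  have [c Mj] : exists c, forall i, M i j = \sum_(l in S) M i l * c l.
    apply: (col_span_of_dependent jS indS) => /col_indep_leq_rankD.
    by rewrite cardsU1 jS cardS ltnn.
  under eq_bigr do rewrite Mj mulr_sumr.
  rewrite exchange_big big1 // => l lS.
  transitivity ((\sum_i u i * M i l) * c l); last by rewrite u_sol // mul0r.
  by rewrite mulr_suml; apply: eq_bigr => i' _; rewrite mulrA.
exists (\row_i u i); first by apply/rV0Pn; exists i; rewrite mxE.
apply/matrixP => ? j; rewrite !mxE -[RHS](uM j).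
by apply: eq_bigr => i' _; rewrite mxE.
Qed.

Lemma full_rank_of_mulmx_span m n (M : 'M[D]_(m, n)) :
  (forall Y : 'M[D]_(m, n),
     exists (P : 'M[D]_m) (Q : 'M[D]_n), Y = P *m M + M *m Q) ->
  full_rank M.
Proof.
move=> spanY; apply/eqP; rewrite eqn_leq rankD_leq_min leqNgt; apply/negP => lt_rank.
have [u /rV0Pn [i ui] uM] := rankD_lt_row_ker (leq_trans lt_rank (geq_minl m n)).
have [c /cV0Pn [j /negP cj] Mc] := rankD_lt_col_ker (leq_trans lt_rank (geq_minr m n)).
have [P [Q Ydef]] := spanY (delta_mx i j).
have : u *m delta_mx i j *m c = 0.
  by rewrite Ydef mulmxDr mulmxDl !mulmxA uM !mul0mx -!mulmxA Mc !mulmx0 addr0.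
rewrite -(mul_delta_mx (0 : 'I_1)) mulmxA -colE -mulmxA -rowE.
move/matrixP/(_ 0 0); rewrite !mxE big_ord1 !mxE => uc0.
by apply: cj; rewrite -(mulKr (unitD ui) (c j 0)) uc0 mulr0.
Qed.

End DivisionRing.

Section LocalRing.
Variable R : unitRingType.
Hypothesis localR : forall x : R, x \is a GRing.unit \/ (1 - x) \is a GRing.unit.

Lemma local_unit_of_linv (u b : R) : u * b = 1 -> b \is a GRing.unit.
Proof.
move=> ub1; have bu_idem : b * u * (b * u) = b * u.
  by rewrite mulrA -(mulrA b) ub1 mulr1.
case: (localR (b * u)) => [bu_unit | bu1_unit].
  apply/unitrP; exists u; split=> //.
  by move: (mulKr bu_unit (b * u)); rewrite bu_idem mulVr // => <-.
have b0 : b = 0.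
  by rewrite -(mulKr bu1_unit b) mulrBl mul1r -mulrA ub1 mulr1 subrr mulr0.
by move/eqP: ub1; rewrite b0 mulr0 eq_sym oner_eq0.
Qed.

Lemma local_unit_of_rinv (u b : R) : b * u = 1 -> b \is a GRing.unit.
Proof.
move=> bu1; have u_unit := local_unit_of_linv bu1.
by rewrite -(mulrK u_unit b) bu1 mul1r unitrV.
Qed.

Lemma local_unit_of_mul (x b z : R) : x * b * z \is a GRing.unit -> b \is a GRing.unit.
Proof.
move=> xbz_unit; pose w := (x * b * z)^-1.
have z_unit : z \is a GRing.unit.
  by apply: (@local_unit_of_linv (w * (x * b))); rewrite -mulrA /w mulVr.
have x_unit : x \is a GRing.unit.
  by apply: (@local_unit_of_rinv (b * z * w)); rewrite !mulrA /w mulrV.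
by move: xbz_unit; rewrite unitrMl // unitrMr.
Qed.

Lemma local_nonunit_radical (b : R) :
  b \isn't a GRing.unit -> forall x z, (1 - x * b * z) \is a GRing.unit.
Proof.
move=> b_nonunit x z; case: (localR (1 - x * b * z)) => //.
by rewrite opprB addrC subrK => /local_unit_of_mul; rewrite (negbTE b_nonunit).
Qed.

End LocalRing.

Lemma residue_division_ring (R D : unitRingType) (q : {rmorphism R -> D}) :
  (forall d, exists b, q b = d) -> (forall b, b \isn't a GRing.unit -> q b = 0) ->
  forall d : D, d != 0 -> d \is a GRing.unit.
Proof.
move=> q_surj q_nonunit d; have [b <-] := q_surj d.
by have [/(rmorph_unit q) //|/q_nonunit ->] := boolP (b \is a GRing.unit); rewrite eqxx.
Qed.

Lemma blk_idx_mxvec_index s r (i : 'I_s) (l : 'I_r) :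
  blk_idx (mxvec_index i l) = (i, l).
Proof. by rewrite /blk_idx /mxvec_index cast_ordK enum_rankK. Qed.

Lemma mxvec_index_blk_idx s r (kk : 'I_(s * r)) :
  mxvec_index (blk_idx kk).1 (blk_idx kk).2 = kk.
Proof. by rewrite /blk_idx /mxvec_index -surjective_pairing enum_valK cast_ordKV. Qed.

Section Bimodule.
Variables (k : fieldType) (A : algType k) (B : unitAlgType k) (X : lmodType k).
Variables (la : A -> X -> X) (ra : X -> B -> X).
Hypothesis bimod : is_bimodule la ra.

Lemma laDr a x x' : la a (x + x') = la a x + la a x'.
Proof. by case: bimod => _ [-> _]. Qed.
Lemma raDr x b b' : ra x (b + b') = ra x b + ra x b'.
Proof. by case: bimod => _ [_ [_ [_ [-> _]]]]. Qed.
Lemma raDl x x' b : ra (x + x') b = ra x b + ra x' b.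
Proof. by case: bimod => _ [_ [_ [_ [_ [-> _]]]]]. Qed.
Lemma raA x b b' : ra x (b * b') = ra (ra x b) b'.
Proof. by case: bimod => _ [_ [_ [_ [_ [_ [_ [-> _]]]]]]]. Qed.
Lemma la_ra a x b : la a (ra x b) = ra (la a x) b.
Proof. by case: bimod => _ [_ [_ [_ [_ [_ [_ [_ [-> _]]]]]]]]. Qed.

Lemma lar0 a : la a 0 = 0.
Proof. by apply: (addrI (la a 0)); rewrite -laDr !addr0. Qed.
Lemma rar0 x : ra x 0 = 0.
Proof. by apply: (addrI (ra x 0)); rewrite -raDr !addr0. Qed.
Lemma ra0r b : ra 0 b = 0.
Proof. by apply: (addrI (ra 0 b)); rewrite -raDl !addr0. Qed.
Lemma raNr x b : ra x (- b) = - ra x b.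
Proof. by apply/eqP; rewrite -addr_eq0 -raDr addNr rar0. Qed.
Lemma raNl x b : ra (- x) b = - ra x b.
Proof. by apply/eqP; rewrite -addr_eq0 -raDl addNr ra0r. Qed.
Lemma raBr x b b' : ra x (b - b') = ra x b - ra x b'.
Proof. by rewrite raDr raNr. Qed.

Lemma la_sumr (I : finType) a (F : I -> X) : la a (\sum_i F i) = \sum_i la a (F i).
Proof. exact: (big_morph (la a) (laDr a) (lar0 a)). Qed.
Lemma ra_sumr (I : finType) x (F : I -> B) : ra x (\sum_i F i) = \sum_i ra x (F i).
Proof. exact: (big_morph (ra x) (raDr x) (rar0 x)). Qed.
Lemma ra_suml (I : finType) b (F : I -> X) : ra (\sum_i F i) b = \sum_i ra (F i) b.
Proof. exact: (big_morph (ra^~ b) (fun x y => raDl x y b) (ra0r b)). Qed.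

Variables (D : unitRingType) (q : {rmorphism B -> D}) (r : nat) (g : 'I_r -> X).
Hypotheses (localB : local_ring B) (kerq : forall b, q b = 0 <-> jacobson b).
Hypothesis gmin : minimal_right_gen ra g.

Lemma q_nonunit b : b \isn't a GRing.unit -> q b = 0.
Proof. by move/(local_nonunit_radical localB)/kerq. Qed.

(* [residue_of] without the [X J_B] error term, which [residue_expansion]
   absorbs into the lift [b]. *)
Definition expansion (x : X) (c : 'I_r -> D) : Prop :=
  exists2 b : 'I_r -> B, (forall l, q (b l) = c l) & x = \sum_l ra (g l) (b l).

Lemma XJ_expansion x : in_XJ ra x -> expansion x (fun _ => 0).
Proof.
case=> n [xs [js [js_rad ->]]].
have [gam xs_gam] := fin_all_exists (fun i => proj1 gmin (xs i)).
exists (fun l => \sum_i gam i l * js i).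
  move=> l; rewrite rmorph_sum big1 // => i _.
  by rewrite rmorphM (proj2 (kerq _) (js_rad i)) mulr0.
under eq_bigr do rewrite xs_gam ra_suml.
rewrite exchange_big; apply: eq_bigr => l _.
by rewrite ra_sumr; apply: eq_bigr => i _; rewrite raA.
Qed.

Lemma residue_expansion x c : residue_of ra q g x c -> expansion x c.
Proof.
case=> b [qb /XJ_expansion [j qj xj]].
exists (fun l => b l + j l); first by move=> l; rewrite rmorphD qb qj addr0.
under eq_bigr do rewrite raDr.
by rewrite big_split /= -xj addrC subrK.
Qed.

(* Nakayama: a unit coefficient would make [g l0] redundant. *)
Lemma relation_coeffs_q0 (d : 'I_r -> B) :
  \sum_l ra (g l) (d l) = 0 -> forall l, q (d l) = 0.
Proof.
move=> rel l0; have [d_unit|/q_nonunit //] := boolP (d l0 \is a GRing.unit).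
pose g' i := g (lift l0 i).
have rel' : \sum_i ra (g' i) (d (lift l0 i)) = - ra (g l0) (d l0).
  by apply/eqP; rewrite -addr_eq0 -[X in _ == X]rel (bigD1_ord l0) //= addrC.
have gen' : right_generates ra g'.
  move=> x; have [b ->] := proj1 gmin x.
  exists (fun i => b (lift l0 i) - d (lift l0 i) * ((d l0)^-1 * b l0)).
  under [RHS]eq_bigr do rewrite raBr raA.
  rewrite sumrB -ra_suml rel' raNl opprK -raA mulrA (mulrV d_unit) mul1r.
  by rewrite (bigD1_ord l0) //= addrC.
have := proj2 gmin _ g' gen'.
by rewrite ltn_geF // ltn_predL (leq_ltn_trans _ (ltn_ord l0)).
Qed.

Lemma expansion_unique x c c' : expansion x c -> expansion x c' -> c =1 c'.
Proof.
case=> b qb xb [b' qb' xb'] l.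
have rel : \sum_l ra (g l) (b l - b' l) = 0.
  by under eq_bigr do rewrite raBr; rewrite sumrB -xb -xb' subrr.
apply/eqP; rewrite -subr_eq0 -qb -qb' -rmorphB; apply/eqP.
exact: relation_coeffs_q0 rel l.
Qed.

Lemma eq_expansion x c c' : c =1 c' -> expansion x c -> expansion x c'.
Proof. by move=> cc' [b qb xb]; exists b => // l; rewrite qb cc'. Qed.

Lemma expansion_sum (I : finType) (F : I -> X) (c : I -> 'I_r -> D) :
  (forall i, expansion (F i) (c i)) -> expansion (\sum_i F i) (fun l => \sum_i c i l).
Proof.
move=> Fc; have [b qb Fb] := fin_all_exists2 Fc.
exists (fun l => \sum_i b i l).
  by move=> l; rewrite rmorph_sum; apply: eq_bigr => i _; rewrite qb.
under eq_bigr do rewrite Fb.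
by rewrite exchange_big; apply: eq_bigr => l _; rewrite ra_sumr.
Qed.

Lemma expansion_add x y c d :
  expansion x c -> expansion y d -> expansion (x + y) (fun l => c l + d l).
Proof.
case=> b qb -> [b' qb' ->]; exists (fun l => b l + b' l).
  by move=> l; rewrite rmorphD qb qb'.
by rewrite -big_split; apply: eq_bigr => l _; rewrite raDr.
Qed.

Lemma expansion_ra x c b : expansion x c -> expansion (ra x b) (fun l => c l * q b).
Proof.
case=> b' qb' ->; exists (fun l => b' l * b); first by move=> l; rewrite rmorphM qb'.
by rewrite ra_suml; apply: eq_bigr => l _; rewrite raA.
Qed.

Variable pi : X -> 'cV[D]_r.
Hypothesis pi_res : forall x, residue_of ra q g x (fun m => pi x m ord0).

Lemma expansion_pi x : expansion x (fun l => pi x l ord0).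
Proof. exact: residue_expansion. Qed.

Lemma pi_of_expansion x c : expansion x c -> forall l, pi x l ord0 = c l.
Proof. exact: expansion_unique (expansion_pi x). Qed.

Lemma pi_mx_add s t (y y' : 'M[X]_(s, t)) :
  pi_mx pi (y + y') = pi_mx pi y + pi_mx pi y'.
Proof.
apply/matrixP => kk j; rewrite !mxE.
exact: pi_of_expansion (expansion_add (expansion_pi _) (expansion_pi _)) _.
Qed.

Lemma pi_mx_ract s t (x : 'M[X]_(s, t)) b :
  pi_mx pi (mx_ract ra x b) = pi_mx pi x *m map_mx q b.
Proof.
apply/matrixP => kk j; rewrite !mxE.
have x_b n := expansion_ra (b n j) (expansion_pi (x (blk_idx kk).1 n)).
rewrite (pi_of_expansion (expansion_sum x_b)).
by apply: eq_bigr => n _; rewrite !mxE.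
Qed.

Hypothesis q_surj : forall d, exists b, q b = d.

Lemma pi_mx_surj s t (Y : 'M[D]_(s * r, t)) : exists y, pi_mx pi y = Y.
Proof.
have lift_entry (p : 'I_s * 'I_t) :
    exists y, forall l, pi y l ord0 = Y (mxvec_index p.1 l) p.2.
  have [b qb] := fin_all_exists (fun l => q_surj (Y (mxvec_index p.1 l) p.2)).
  by exists (\sum_l ra (g l) (b l)); apply: pi_of_expansion; exists b.
have [y yY] := fin_all_exists lift_entry.
exists (\matrix_(i, j) y (i, j)).
by apply/matrixP => kk j; rewrite !mxE yY mxvec_index_blk_idx.
Qed.

Variables (s : nat) (phi : 'M[A]_s -> 'M[D]_(s * r)).
Hypothesis phi_res : forall (a : 'M[A]_s) (i : 'I_s) (kk : 'I_(s * r)),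
  residue_of ra q g (la (a i (blk_idx kk).1) (g (blk_idx kk).2))
    (fun m => phi a (mxvec_index i m) kk).

Lemma expansion_la (a : 'M[A]_s) i m x c : expansion x c ->
  expansion (la (a i m) x)
    (fun l' => \sum_l phi a (mxvec_index i l') (mxvec_index m l) * c l).
Proof.
case=> b qb ->; rewrite la_sumr; under eq_bigr do rewrite la_ra.
have ag l : expansion (la (a i m) (g l))
                     (fun l' => phi a (mxvec_index i l') (mxvec_index m l)).
  have := phi_res a i (mxvec_index m l).
  by rewrite blk_idx_mxvec_index => /residue_expansion.
apply: eq_expansion (expansion_sum (fun l => expansion_ra (b l) (ag l))) => l' /=.
by apply: eq_bigr => l _; rewrite qb.
Qed.

Lemma pi_mx_lact t a (x : 'M[X]_(s, t)) :
  pi_mx pi (mx_lact la a x) = phi a *m pi_mx pi x.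
Proof.
apply/matrixP => kk j; rewrite !mxE.
have a_x m := expansion_la a (blk_idx kk).1 m (expansion_pi (x m j)).
rewrite (pi_of_expansion (expansion_sum a_x)) /= mxvec_index_blk_idx.
rewrite (reindex (fun p : 'I_s * 'I_r => mxvec_index p.1 p.2)) /=; last first.
  exists (@blk_idx s r) => [[i l] _|kk' _].
    by rewrite blk_idx_mxvec_index.
  by rewrite mxvec_index_blk_idx.
rewrite -(pair_bigA _ (fun m l =>
  phi a kk (mxvec_index m l) * pi_mx pi x (mxvec_index m l) j)).
by apply: eq_bigr => m _; apply: eq_bigr => l _; rewrite !mxE blk_idx_mxvec_index.
Qed.

End Bimodule.

Theorem proposition3p11 (k : fieldType) (A : algType k) (B : unitAlgType k)
    (X : lmodType k) (la : A -> X -> X) (ra : X -> B -> X)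
    (D : unitRingType) (q : {rmorphism B -> D})
    (r : nat) (g : 'I_r -> X) (pi : X -> 'cV[D]_r) :
  is_bimodule la ra -> local_ring B -> left_fg la -> right_fg ra ->
  (forall d : D, exists b : B, q b = d) ->
  (forall b : B, q b = 0 <-> jacobson b) ->
  minimal_right_gen ra g ->
  (forall x : X, residue_of ra q g x (fun m => pi x m ord0)) ->
  forall (s t : nat) (phi : 'M[A]_s -> 'M[D]_(s * r)),
  (forall (a : 'M[A]_s) (i : 'I_s) (kk : 'I_(s * r)),
     residue_of ra q g (la (a i (blk_idx kk).1) (g (blk_idx kk).2))
       (fun m => phi a (mxvec_index i m) kk)) ->
  (forall (a : 'M[A]_s) (x : 'M[X]_(s, t)) (b : 'M[B]_t),
     pi_mx pi (mx_ract ra (mx_lact la a x) b) = phi a *m pi_mx pi x *m map_mx q b)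
  /\
  (forall x : 'M[X]_(s, t), Px_presilting la ra x -> full_rank (pi_mx pi x)).
Proof.
(* Finite generation of [X] only enters through the minimal generating set [g]. *)
move=> bimod localB _ _ q_surj kerq gmin pi_res s t phi phi_res.
have pi_lact := pi_mx_lact bimod localB kerq gmin pi_res phi_res.
have pi_ract := pi_mx_ract bimod localB kerq gmin pi_res.
split=> [a x b | x presilting]; first by rewrite pi_ract pi_lact.
have unitD := residue_division_ring q_surj (q_nonunit localB kerq).
apply: (full_rank_of_mulmx_span unitD) => Y.
have [y <-] := pi_mx_surj bimod localB kerq gmin pi_res q_surj Y.
have [a [b ->]] := presilting y.
exists (phi a), (map_mx q b).
by rewrite (pi_mx_add bimod localB kerq gmin pi_res) pi_lact pi_ract.
Qed.
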